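(* Let $I$ be a real interval centered at $0$ with $[-1,1]\subseteq I$, and let $f\colon I^n\to\mathbb{R}$ be such that $f|_{I_+^n}$ or $f|_{I_-^n}$ is nonconstant. The following are equivalent: (i) $f$ is a symmetric quasi-Lovász extension and there exists $A\subseteq[n]$ with $f_0(\mathbf{1}_A)\neq 0$; (ii) $f$ is comonotonically modular and $f_0$ is oddly homogeneous; (iii) there exists a nondecreasing odd function $\varphi_f\colon I\to\mathbb{R}$ with $\varphi_f(1)=1$ such that $f=\check{L}_{f|_{\{0,1\}^n}}\circ\varphi_f$, i.e. $f(\mathbf{x})=\check{L}_{f|_{\{0,1\}^n}}(\varphi_f(x_1),\ldots,\varphi_f(x_n))$ for all $\mathbf{x}\in I^n$.
   Context: Notation: $[n]=\{1,\ldots,n\}$; $I_+=I\cap[0,\infty[$, $I_-=I\cap\,]-\infty,0]$; $\mathbf{1}_A$ is the indicator tuple of $A\subseteq[n]$, $\mathbf{0}=\mathbf{1}_\varnothing$; for a function $g$, $g_0=g-g(\mathbf{0})$; $\mathbf{x}^+$ has components $\max(x_i,0)$, $\mathbf{x}^-=(-\mathbf{x})^+$. For $\sigma$ a permutation of $[n]$, $\mathbb{R}^n_\sigma=\{\mathbf{x}: x_{\sigma(1)}\leq\cdots\leq x_{\sigma(n)}\}$, $A^\uparrow_\sigma(i)=\{\sigma(i),\ldots,\sigma(n)\}$, $A^\uparrow_\sigma(n+1)=\varnothing$. The Lovász extension $L_\psi\colon\mathbb{R}^n\to\mathbb{R}$ of $\psi\colon\{0,1\}^n\to\mathbb{R}$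 is the function whose restriction to each $\mathbb{R}^n_\sigma$ is the unique affine function agreeing with $\psi$ at the points $\mathbf{1}_{A^\uparrow_\sigma(k)}$, $k\in[n+1]$. The symmetric Lovász extension of $\psi$ is $\check{L}_\psi(\mathbf{x})=\psi(\mathbf{0})+L_\psi(\mathbf{x}^+)-L_\psi(\mathbf{x}^-)$; a symmetric Lovász extension is any $\check{L}_\psi$. A symmetric quasi-Lovász extension is $f(\mathbf{x})=\check{L}(\varphi(x_1),\ldots,\varphi(x_n))$ with $\check{L}$ a symmetric Lovász extension and $\varphi\colon I\to\mathbb{R}$ nondecreasing and odd. Comonotonic: $\mathbf{x},\mathbf{x}'\in I^n\cap\mathbb{R}^n_\sigma$ for some $\sigma$. Comonotonically modular: $f(\mathbf{x})+f(\mathbf{x}')=f(\mathbf{x}\wedge\mathbf{x}')+f(\mathbf{x}\vee\mathbf{x}')$ for all comonotonic $\mathbf{x},\mathbf{x}'$ ($\wedge,\vee$ componentwise). A function $g\colon I^n\to\mathbb{R}$ is oddly homogeneous if there exists a nondecreasing odd $\phi\colon I\to\mathbb{R}$ with $g(x\mathbf{1}_A)=\phi(x)g(\mathbf{1}_A)$ for all $x\in I$, $A\subseteq[n]$. *)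

From HB Require Import structures.
From mathcomp Require Import all_boot all_order all_algebra all_fingroup.
Set Implicit Arguments. Unset Strict Implicit. Unset Printing Implicit Defensive.
Import Order.TTheory GRing.Theory Num.Theory.
Local Open Scope ring_scope.

Section Defs.
Variables (R : realFieldType) (n : nat).
Notation vec := ('I_n -> R).

Definition ind (A : {set 'I_n}) : vec := fun i => if i \in A then 1 else 0.
Definition zerov : vec := fun _ => 0.

Definition vpos (x : vec) : vec := fun i => Num.max (x i) 0.
Definition vneg (x : vec) : vec := vpos (fun i => - x i).

Definition vmin (x y : vec) : vec := fun i => Num.min (x i) (y i).
Definition vmax (x y : vec) : vec := fun i => Num.max (x i) (y i).

Definition shift0 (g : vec -> R) : vec -> R := fun x => g x - g zerov.

(* x \in R^n_sigma : x_{sigma 0} <= ... <= x_{sigma (n-1)}  (0-indexed) *)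
Definition in_sigma (s : {perm 'I_n}) (x : vec) : bool :=
  [forall i : 'I_n, forall j : 'I_n, (i <= j)%N ==> (x (s i) <= x (s j))].

Definition Aup (s : {perm 'I_n}) (k : nat) : {set 'I_n} :=
  [set s j | j in [set j : 'I_n | (k <= j)%N]].

(* Lovasz extension of psi (psi is only evaluated at 0/1-vectors 1_A).
   On R^n_sigma it is the affine function
     psi(0) + sum_i x_{sigma i} (psi(1_{A^up(i)}) - psi(1_{A^up(i+1)})),
   which is the unique affine function agreeing with psi at the points
   1_{A^up_sigma(k)}, k = 0..n. *)
Definition lovasz (psi : vec -> R) (x : vec) : R :=
  match [pick s : {perm 'I_n} | in_sigma s x] with
  | Some s => psi zerov +
      \sum_(i < n) x (s i) * (psi (ind (Aup s i)) - psi (ind (Aup s i.+1)))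
  | None => 0
  end.

Definition sym_lovasz (psi : vec -> R) (x : vec) : R :=
  psi zerov + lovasz psi (vpos x) - lovasz psi (vneg x).

Definition in_In (I : R -> Prop) (x : vec) : Prop := forall i, I (x i).

Definition is_interval (I : R -> Prop) : Prop :=
  forall x y z, I x -> I z -> x <= y -> y <= z -> I y.
Definition centered0 (I : R -> Prop) : Prop := forall x, I x -> I (- x).
Definition contains_m11 (I : R -> Prop) : Prop :=
  forall x, -1 <= x -> x <= 1 -> I x.

Definition nondecr_on (I : R -> Prop) (phi : R -> R) : Prop :=
  forall x y, I x -> I y -> x <= y -> phi x <= phi y.
Definition odd_on (I : R -> Prop) (phi : R -> R) : Prop :=
  forall x, I x -> phi (- x) = - phi x.

Definition sym_quasi_lovasz (I : R -> Prop) (f : vec -> R) : Prop :=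
  exists (psi : vec -> R) (phi : R -> R),
    nondecr_on I phi /\ odd_on I phi /\
    forall x, in_In I x -> f x = sym_lovasz psi (fun i => phi (x i)).

Definition comono_modular (I : R -> Prop) (f : vec -> R) : Prop :=
  forall (s : {perm 'I_n}) (x y : vec), in_In I x -> in_In I y ->
    in_sigma s x -> in_sigma s y ->
    f x + f y = f (vmin x y) + f (vmax x y).

Definition oddly_homogeneous (I : R -> Prop) (g : vec -> R) : Prop :=
  exists phi : R -> R, nondecr_on I phi /\ odd_on I phi /\
    forall (x : R) (A : {set 'I_n}), I x ->
      g (fun i => x * ind A i) = phi x * g (ind A).

Definition nonconst_on (S : R -> Prop) (f : vec -> R) : Prop :=
  exists x y, in_In S x /\ in_In S y /\ f x <> f y.

End Defs.

(* On each chamber R^n_sigma the Lovász extension is affine, and on the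
   boundary between chambers the affine pieces agree, because a tie between
   sorted values only changes an upper level set 1_{A^up_sigma(k)} at a step
   whose coefficient vanishes.  Hence x |-> L(phi x) is comonotonically modular
   and homogeneous along the rays t 1_A, which gives (i) => (ii).
   Conversely, for u >= 0 sorted by sigma, comonotonic modularity telescopes
   f(u) along the truncations of u to the sets A^up_sigma(k); homogeneity
   identifies the increments with the terms of the Lovász extension of
   f|{0,1}^n evaluated at phi(u), and modularity with 0 splits f(x) into its
   positive and negative parts, which gives (ii) => (iii).  The nonconstancy of f
   rules out f_0(1_A) = 0 for all A, and this forces phi(1) = 1. *)

From HB Require Import structures.
From mathcomp Require Import all_boot all_order all_algebra all_fingroup.
From mathcomp Require Import lra.
From Stdlib Require Import FunctionalExtensionality.
Set Implicit Arguments. Unset Strict Implicit. Unset Printing Implicit Defensive.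
Import Order.TTheory GRing.Theory Num.Theory.
Local Open Scope ring_scope.

Section Vectors.
Variables (R : realFieldType) (n : nat) (I : R -> Prop).
Implicit Types (x y : 'I_n -> R).

Lemma in_In_vmin x y : in_In I x -> in_In I y -> in_In I (vmin x y).
Proof. by move=> Ix Iy i; rewrite /vmin; case: leP. Qed.

Lemma in_In_vmax x y : in_In I x -> in_In I y -> in_In I (vmax x y).
Proof. by move=> Ix Iy i; rewrite /vmax; case: leP. Qed.

Lemma mul1_fun x : (fun i => 1 * x i) = x.
Proof. by apply: functional_extensionality => i; rewrite mul1r. Qed.

Lemma nonconst_on_sub (S : R -> Prop) (f : ('I_n -> R) -> R) :
  (forall a, S a -> I a) -> nonconst_on S f -> nonconst_on I f.
Proof.
by move=> SI [x [y [Sx [Sy fxy]]]]; exists x, y; split; [|split] => // i; apply: SI.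
Qed.

End Vectors.

Section Chambers.
Variables (R : realFieldType) (n : nat).
Implicit Types (s : {perm 'I_n}) (x y : 'I_n -> R).

Lemma in_sigmaP s x :
  reflect (forall i j : 'I_n, (i <= j)%N -> x (s i) <= x (s j)) (in_sigma s x).
Proof.
apply: (iffP forallP) => [H i j ij | H i]; first by have /forallP/(_ j)/implyP := H i; apply.
by apply/forallP => j; apply/implyP; apply: H.
Qed.

Lemma exists_in_sigma x : exists s, in_sigma s x.
Proof.
pose le i j := x i <= x j.
pose l := sort le (enum 'I_n).
have size_l : size l = n by rewrite size_sort size_enum_ord.
have uniq_l : uniq l by rewrite sort_uniq enum_uniq.
have sorted_l : sorted le l by apply: sort_sorted => i j; exact: le_total.
pose g k := nth k l k.
have g_inj : injective g.
  move=> i j; rewrite /g (set_nth_default i j) ?size_l // => /eqP.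
  by rewrite nth_uniq ?size_l // => /eqP /val_inj.
exists (perm g_inj); apply/in_sigmaP => i j ij.
rewrite !permE /g !(set_nth_default i) ?size_l //.
have le_tr : transitive le by move=> b a c; exact: le_trans.
by apply: (sorted_leq_nth le_tr (fun a => lexx (x a))) => //; rewrite inE size_l.
Qed.

Lemma in_sigma0 s : in_sigma s (@zerov R n).
Proof. by apply/in_sigmaP. Qed.

Lemma in_sigma_vmin s x y : in_sigma s x -> in_sigma s y -> in_sigma s (vmin x y).
Proof.
by move=> /in_sigmaP sx /in_sigmaP sy; apply/in_sigmaP => i j ij; apply: le_min2; auto.
Qed.

Lemma in_sigma_vmax s x y : in_sigma s x -> in_sigma s y -> in_sigma s (vmax x y).
Proof.
by move=> /in_sigmaP sx /in_sigmaP sy; apply/in_sigmaP => i j ij; apply: le_max2; auto.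
Qed.

Lemma in_sigma_vpos s x : in_sigma s x -> in_sigma s (vpos x).
Proof. by move=> /in_sigmaP sx; apply/in_sigmaP => i j ij; apply: le_max2 => //; auto. Qed.

Lemma in_sigma_mul s x y : (forall i, 0 <= x i) -> (forall i, 0 <= y i) ->
  in_sigma s x -> in_sigma s y -> in_sigma s (fun i => x i * y i).
Proof.
move=> x0 y0 /in_sigmaP sx /in_sigmaP sy.
by apply/in_sigmaP => i j ij; apply: ler_pM; auto.
Qed.

Lemma in_sigma_nondecr (I : R -> Prop) (phi : R -> R) s x :
  nondecr_on I phi -> in_In I x -> in_sigma s x -> in_sigma s (fun i => phi (x i)).
Proof. by move=> phi_nd Ix /in_sigmaP sx; apply/in_sigmaP => i j ij; apply: phi_nd; auto. Qed.

Lemma in_sigma_scale s x (c : R) : 0 <= c -> in_sigma s x -> in_sigma s (fun i => c * x i).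
Proof. by move=> c0 /in_sigmaP sx; apply/in_sigmaP => i j ij; apply: ler_wpM2l; auto. Qed.

Definition rev_perm s : {perm 'I_n} := perm (inj_comp (@perm_inj _ s) (@rev_ord_inj n)).

Lemma in_sigma_rev s x : in_sigma s x -> in_sigma (rev_perm s) (fun i => - x i).
Proof.
move=> /in_sigmaP sx; apply/in_sigmaP => i j ij.
by rewrite !permE /= lerN2; apply: sx; rewrite /= leq_sub2l.
Qed.

Lemma mem_Aup s (j : 'I_n) k : (s j \in Aup s k) = (k <= j)%N.
Proof. by rewrite mem_imset ?inE //; exact: perm_inj. Qed.

Lemma ind_Aup s (j : 'I_n) k : ind R (Aup s k) (s j) = if (k <= j)%N then 1 else 0.
Proof. by rewrite /ind mem_Aup. Qed.

Lemma Aup_n s : Aup s n = set0.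
Proof. by apply/setP => i; rewrite inE -(permKV s i) mem_Aup leqNgt ltn_ord. Qed.

Lemma ind_ge0 (B : {set 'I_n}) i : 0 <= ind R B i.
Proof. by rewrite /ind; case: ifP. Qed.

Lemma in_sigma_ind s k : in_sigma s (ind R (Aup s k)).
Proof.
apply/in_sigmaP => i j ij; rewrite !ind_Aup.
by case: ifP => [ki|_]; rewrite ?(leq_trans ki ij) ?lexx //; case: ifP.
Qed.

Definition order_stat x k : R := nth 0 (sort <=%R [seq x i | i <- enum 'I_n]) k.

Lemma order_statE s x (j : 'I_n) : in_sigma s x -> order_stat x j = x (s j).
Proof.
move=> /in_sigmaP sx; rewrite /order_stat.
suff -> : sort <=%R [seq x i | i <- enum 'I_n] = [seq x (s i) | i <- enum 'I_n].
  by rewrite (nth_map j) ?size_enum_ord ?nth_ord_enum.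
apply: le_sorted_eq; first by apply: sort_sorted => a b; exact: le_total.
- have : sorted ltn (map val (enum 'I_n)) by rewrite val_enum_ord iota_ltn_sorted.
  rewrite !sorted_map; apply: sub_sorted => a b /ltnW; exact: sx.
- rewrite perm_sort (map_comp x s); apply: perm_map.
  apply: uniq_perm; first exact: enum_uniq.
    by rewrite map_inj_uniq ?enum_uniq //; exact: perm_inj.
  by move=> i; rewrite mem_enum -(permKV s i) map_f ?mem_enum.
Qed.

Lemma order_stat_homo x :
  {in gtn n &, {homo order_stat x : i j / (i <= j)%N >-> i <= j}}.
Proof.
move=> i j ni nj ij; apply: (sorted_leq_nth le_trans lexx) => //.
- by apply: sort_sorted => a b; exact: le_total.
- by rewrite inE size_sort size_map size_enum_ord.
- by rewrite inE size_sort size_map size_enum_ord.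
Qed.

Lemma Aup_order_stat s x k : in_sigma s x -> (k < n)%N ->
  (k == 0)%N || (order_stat x k.-1 < order_stat x k) ->
  Aup s k = [set i | order_stat x k <= x i].
Proof.
move=> sx kn jump; apply/setP => i; rewrite inE -(permKV s i) mem_Aup.
set j := (s^-1)%g i; rewrite -(order_statE _ sx).
have jn : (j < n)%N := ltn_ord j.
case: leqP => [kj|jk]; first by rewrite order_stat_homo.
apply/esym/negbTE; rewrite -ltNge.
case/orP: jump => [/eqP k0|lt]; first by rewrite k0 in jk.
apply: le_lt_trans lt; apply: order_stat_homo; rewrite ?inE //.
- exact: leq_ltn_trans (leq_pred k) kn.
- by rewrite -ltnS (ltn_predK jk).
Qed.

End Chambers.

Lemma sum_by_parts (V : pzRingType) (v a : nat -> V) m :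
  \sum_(0 <= k < m) v k * (a k - a k.+1) =
  \sum_(0 <= k < m) (v k - (if k is k'.+1 then v k' else 0)) * (a k - a m).
Proof.
pose w k := if k is k'.+1 then v k' else 0.
have sum_diff j : \sum_(0 <= k < j.+1) (v k - w k) = v j.
  by rewrite (telescope_sumr w (leq0n j.+1)) subr0.
elim: m => [|m IH]; first by rewrite !big_geq.
rewrite big_nat_recr //= IH [RHS]big_nat_recr //= -/(w _).
have split_diff k : a k - a m.+1 = (a k - a m) + (a m - a m.+1) by rewrite addrA subrK.
under [in RHS]eq_bigr => k _ do rewrite -/(w k) split_diff mulrDr.
by rewrite big_split /= -big_distrl -addrA -mulrDl -big_nat_recr //= sum_diff.
Qed.

Section LovaszExtension.
Variables (R : realFieldType) (n : nat).
Implicit Types (s t : {perm 'I_n}) (psi : ('I_n -> R) -> R) (x y z w : 'I_n -> R).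
Local Notation zerov := (@zerov R n).

Definition lovasz_chamber s psi x : R :=
  psi zerov + \sum_(i < n) x (s i) * (psi (ind R (Aup s i)) - psi (ind R (Aup s i.+1))).

Lemma lovasz_chamber_by_parts s psi x : in_sigma s x ->
  lovasz_chamber s psi x = psi zerov + \sum_(0 <= k < n)
    (order_stat x k - (if k is k'.+1 then order_stat x k' else 0)) *
    (psi (ind R (Aup s k)) - psi (ind R set0)).
Proof.
move=> sx; rewrite /lovasz_chamber -(Aup_n s) -sum_by_parts big_mkord.
by congr (_ + _); apply: eq_bigr => i _; rewrite (order_statE _ sx).
Qed.

Lemma lovasz_chamber_indep s t psi x : in_sigma s x -> in_sigma t x ->
  lovasz_chamber s psi x = lovasz_chamber t psi x.
Proof.
move=> sx tx; rewrite !lovasz_chamber_by_parts //; congr (_ + _).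
apply: eq_big_nat => k /andP[_ kn].
set d := (order_stat x k - _); have [->|jump] := eqVneq d 0; first by rewrite !mul0r.
suff jumpk : (k == 0)%N || (order_stat x k.-1 < order_stat x k).
  by rewrite (Aup_order_stat sx kn jumpk) (Aup_order_stat tx kn jumpk).
move: kn jump; rewrite {}/d; case: k => //= k kn.
rewrite subr_eq0 lt_def => -> /=; apply: order_stat_homo; rewrite ?inE //.
exact: ltnW.
Qed.

Lemma lovasz_in_sigma s psi x : in_sigma s x -> lovasz psi x = lovasz_chamber s psi x.
Proof.
move=> sx; rewrite /lovasz; case: pickP => [t tx | /(_ s)]; last by rewrite sx.
exact: lovasz_chamber_indep.
Qed.

Lemma lovasz_chamberDD s psi x y z w : (forall i, x i + y i = z i + w i) ->
  lovasz_chamber s psi x + lovasz_chamber s psi y =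
  lovasz_chamber s psi z + lovasz_chamber s psi w.
Proof.
move=> xyzw; rewrite /lovasz_chamber addrACA [RHS]addrACA -!big_split /=.
by congr (_ + _); apply: eq_bigr => i _; rewrite -!mulrDl xyzw.
Qed.

Lemma lovasz_chamberZ s psi x (c : R) :
  lovasz_chamber s psi (fun i => c * x i) =
  psi zerov + c * (lovasz_chamber s psi x - psi zerov).
Proof.
rewrite /lovasz_chamber [psi zerov + _ - _]addrC addKr big_distrr.
by congr (_ + _); apply: eq_bigr => i _ /=; rewrite mulrA.
Qed.

Lemma lovasz0 psi : lovasz psi zerov = psi zerov.
Proof.
rewrite (lovasz_in_sigma _ (in_sigma0 R 1%g)) /lovasz_chamber big1 ?addr0 // => i _.
exact: mul0r.
Qed.

Lemma lovaszZ psi x (c : R) : 0 <= c ->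
  lovasz psi (fun i => c * x i) = psi zerov + c * (lovasz psi x - psi zerov).
Proof.
move=> c0; have [s sx] := exists_in_sigma x.
by rewrite (lovasz_in_sigma _ sx) (lovasz_in_sigma _ (in_sigma_scale c0 sx)) lovasz_chamberZ.
Qed.

Lemma sym_lovaszZ psi x (c : R) : (forall i, 0 <= x i) ->
  sym_lovasz psi (fun i => c * x i) = psi zerov + c * (lovasz psi x - psi zerov).
Proof.
move=> x0; rewrite /sym_lovasz; have [c0|c0] := lerP 0 c.
  have -> : vpos (fun i => c * x i) = (fun i => c * x i).
    by apply: functional_extensionality => i; rewrite /vpos max_l // mulr_ge0.
  have -> : vneg (fun i => c * x i) = zerov.
    apply: functional_extensionality => i.
    by rewrite /vneg /vpos max_r // oppr_le0 mulr_ge0.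
  by rewrite lovasz0 lovaszZ // [_ + (_ + _)]addrC addrK.
have -> : vpos (fun i => c * x i) = zerov.
  apply: functional_extensionality => i.
  by rewrite /vpos max_r // -oppr_ge0 -mulNr mulr_ge0 // oppr_ge0 ltW.
have -> : vneg (fun i => c * x i) = (fun i => - c * x i).
  apply: functional_extensionality => i.
  by rewrite /vneg /vpos max_l -mulNr // mulr_ge0 // oppr_ge0 ltW.
by rewrite lovasz0 lovaszZ ?oppr_ge0 ?ltW // opprD addrA addrK mulNr opprK.
Qed.

Lemma sym_lovasz_const psi x : (forall B, psi (ind R B) = psi zerov) ->
  sym_lovasz psi x = psi zerov.
Proof.
move=> psiB; suff lovasz_const y : lovasz psi y = psi zerov.
  by rewrite /sym_lovasz !lovasz_const addrK.
have [s sy] := exists_in_sigma y.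
rewrite (lovasz_in_sigma _ sy) /lovasz_chamber big1 ?addr0 // => i _.
by rewrite !psiB subrr mulr0.
Qed.

(* Comonotonic vectors share the chamber s for their positive parts and the
   reversed chamber for their negative parts, where the Lovász extension is affine. *)
Lemma sym_lovasz_comono_modular (I : R -> Prop) psi (phi : R -> R) :
  nondecr_on I phi -> comono_modular I (fun x => sym_lovasz psi (fun i => phi (x i))).
Proof.
move=> phi_nd s x y Ix Iy sx sy.
have Imin := in_In_vmin Ix Iy; have Imax := in_In_vmax Ix Iy.
have chambers z : in_In I z -> in_sigma s z ->
    in_sigma s (vpos (fun i => phi (z i))) /\
    in_sigma (rev_perm s) (vneg (fun i => phi (z i))).
  move=> Iz sz; have sphiz := in_sigma_nondecr phi_nd Iz sz.
  by split; apply: in_sigma_vpos; [|apply: in_sigma_rev].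
have [px nx] := chambers x Ix sx; have [py ny] := chambers y Iy sy.
have [pmin nmin] := chambers _ Imin (in_sigma_vmin sx sy).
have [pmax nmax] := chambers _ Imax (in_sigma_vmax sx sy).
rewrite /sym_lovasz !(lovasz_in_sigma _ px, lovasz_in_sigma _ nx, lovasz_in_sigma _ py,
  lovasz_in_sigma _ ny, lovasz_in_sigma _ pmin, lovasz_in_sigma _ nmin,
  lovasz_in_sigma _ pmax, lovasz_in_sigma _ nmax).
have affine_sum (p a b c d e g h k : R) :
    a + c = e + h -> b + d = g + k -> p + a - b + (p + c - d) = p + e - g + (p + h - k).
  by move=> ? ?; lra.
by apply: affine_sum; apply: lovasz_chamberDD => i;
  rewrite /vpos /vneg /vpos /vmin /vmax; case: (leP (x i) (y i)) => _ //; exact: addrC.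
Qed.

End LovaszExtension.

Section ComonotonicModularity.
Variables (R : realFieldType) (n : nat) (I : R -> Prop).
Implicit Types (h : ('I_n -> R) -> R) (s : {perm 'I_n}) (x u : 'I_n -> R).
Local Notation zerov := (@zerov R n).

Lemma in_In_mul_ind x B : I 0 -> in_In I x -> in_In I (fun i => x i * ind R B i).
Proof. by move=> I0 Ix i; rewrite /ind; case: ifP; rewrite ?mulr1 ?mulr0. Qed.

Lemma comono_modular_opp h : centered0 I -> comono_modular I h ->
  comono_modular I (fun x => h (fun i => - x i)).
Proof.
move=> I_opp h_mod s x y Ix Iy sx sy.
rewrite (h_mod (rev_perm s)) ?in_sigma_rev // => [|i|i]; try exact: I_opp.
rewrite addrC; congr (h _ + h _); apply: functional_extensionality => i;
  rewrite /vmin /vmax; case: (leP (x i) (y i)) => xy.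
- by rewrite max_l // lerN2.
- by rewrite max_r // lerN2 ltW.
- by rewrite min_r // lerN2.
- by rewrite min_l // lerN2 ltW.
Qed.

(* x and 0 are comonotonic, with x /\ 0 = - x^- and x \/ 0 = x^+. *)
Lemma comono_modular_split h x : I 0 -> comono_modular I h -> in_In I x ->
  h x + h zerov = h (vpos x) + h (fun i => - vneg x i).
Proof.
move=> I0 h_mod Ix; have [s sx] := exists_in_sigma x.
rewrite (h_mod s x zerov) ?in_sigma0 // addrC; congr (_ + h _).
apply: functional_extensionality => i; rewrite /vmin /vneg /vpos /zerov.
case: (leP (x i) 0) => x0; first by rewrite max_l ?opprK // oppr_ge0.
by rewrite max_r ?oppr0 // oppr_le0 ltW.
Qed.

Section Chain.
Variables (h : ('I_n -> R) -> R) (s : {perm 'I_n}) (u : 'I_n -> R).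
Hypotheses (I0 : I 0) (h_mod : comono_modular I h) (Iu : in_In I u)
  (u_ge0 : forall i, 0 <= u i) (su : in_sigma s u).

Let trunc k : 'I_n -> R := fun i => u i * ind R (Aup s k) i.

Lemma comono_modular_trunc (k : 'I_n) :
  h (trunc k) - h (trunc k.+1) =
  h (fun i => u (s k) * ind R (Aup s k) i) - h (fun i => u (s k) * ind R (Aup s k.+1) i).
Proof.
set w := fun i => u (s k) * ind R (Aup s k) i.
have Iw : in_In I w by apply: (in_In_mul_ind (x := fun=> u (s k))) => // i.
have sw : in_sigma s w by apply: in_sigma_scale; [exact: u_ge0 | exact: in_sigma_ind].
have str : in_sigma s (trunc k.+1).
  by apply: in_sigma_mul => //; [exact: ind_ge0 | exact: in_sigma_ind].
have := @h_mod s (trunc k.+1) w (in_In_mul_ind _ I0 Iu) Iw str sw.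
have mono (j : 'I_n) : (k < j)%N -> u (s k) <= u (s j).
  by move=> /ltnW kj; move/in_sigmaP: su; apply.
have -> : vmin (trunc k.+1) w = (fun i => u (s k) * ind R (Aup s k.+1) i).
  apply: functional_extensionality => i; rewrite /vmin /trunc /w -(permKV s i).
  rewrite !ind_Aup; case: ltngtP => [kj|jk|/ord_inj <-]; rewrite ?mulr1 ?mulr0 ?minxx //.
    exact/min_r/mono.
  by rewrite min_l // mulr_ge0.
have -> : vmax (trunc k.+1) w = trunc k.
  apply: functional_extensionality => i; rewrite /vmax /trunc /w -(permKV s i).
  rewrite !ind_Aup; case: ltngtP => [kj|jk|/ord_inj <-]; rewrite ?mulr1 ?mulr0 ?maxxx //.
    exact/max_l/mono.
  by rewrite max_r // mulr_ge0.
by move=> modular; lra.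
Qed.

Lemma comono_modular_chain :
  h u = h zerov + \sum_(k < n)
    (h (fun i => u (s k) * ind R (Aup s k) i) - h (fun i => u (s k) * ind R (Aup s k.+1) i)).
Proof.
have trunc0 : trunc 0 = u.
  apply: functional_extensionality => i; rewrite /trunc -(permKV s i) ind_Aup.
  exact: mulr1.
have truncn : trunc n = zerov.
  by apply: functional_extensionality => i; rewrite /trunc Aup_n /ind inE mulr0.
have telescope : \sum_(k < n) (h (trunc k) - h (trunc k.+1)) = h (trunc 0) - h (trunc n).
  rewrite -opprB -(telescope_sumr (fun k => h (trunc k)) (leq0n n)) -sumrN big_mkord.
  by apply: eq_bigr => k _; rewrite opprB.
rewrite -(eq_bigr _ (fun k _ => comono_modular_trunc k)) telescope trunc0 truncn.
by rewrite addrC subrK.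
Qed.

End Chain.

Lemma comono_modular_affine h (chi : R -> R) (c : {set 'I_n} -> R) s u :
  I 0 -> comono_modular I h -> in_In I u -> (forall i, 0 <= u i) -> in_sigma s u ->
  (forall t B, I t -> h (fun i => t * ind R B i) = h zerov + chi t * c B) ->
  h u = h zerov + \sum_(k < n) chi (u (s k)) * (c (Aup s k) - c (Aup s k.+1)).
Proof.
move=> I0 h_mod Iu u_ge0 su h_ind; rewrite (comono_modular_chain I0 h_mod Iu u_ge0 su).
by congr (_ + _); apply: eq_bigr => k _; rewrite !h_ind // [h zerov + _]addrC addrKA mulrBr.
Qed.

End ComonotonicModularity.

Lemma odd_on0 (R : realFieldType) (I : R -> Prop) (phi : R -> R) :
  I 0 -> odd_on I phi -> phi 0 = 0.
Proof.
move=> I0 phi_odd; have := phi_odd 0 I0; rewrite oppr0 => /eqP.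
by rewrite -addr_eq0 -mulr2n mulrn_eq0 /= => /eqP.
Qed.

Section Representation.
Variables (R : realFieldType) (n : nat) (I : R -> Prop) (f : ('I_n -> R) -> R) (phi : R -> R).
Hypotheses (I_opp : centered0 I) (I0 : I 0) (f_mod : comono_modular I f)
  (phi_nd : nondecr_on I phi) (phi_odd : odd_on I phi)
  (f_hom : forall t A, I t ->
     shift0 f (fun i => t * ind R A i) = phi t * shift0 f (ind R A)).
Implicit Types (x u : 'I_n -> R).
Local Notation zerov := (@zerov R n).

Lemma nondecr_odd_vpos x : in_In I x ->
  (fun i => phi (vpos x i)) = vpos (fun i => phi (x i)).
Proof.
move=> Ix; apply: functional_extensionality => i; rewrite /vpos.
have phi0 := odd_on0 I0 phi_odd.
case: (leP (x i) 0) => x0; first by rewrite phi0 max_r // -phi0 phi_nd.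
by rewrite max_l // -phi0 phi_nd // ltW.
Qed.

Lemma nondecr_odd_vneg x : in_In I x ->
  (fun i => phi (vneg x i)) = vneg (fun i => phi (x i)).
Proof.
move=> Ix; rewrite /vneg nondecr_odd_vpos => [|i]; last exact: I_opp.
by congr vpos; apply: functional_extensionality => i; rewrite phi_odd.
Qed.

Lemma scaled_indE t B : I t ->
  f (fun i => t * ind R B i) = f zerov + phi t * shift0 f (ind R B).
Proof. by move=> It; rewrite -f_hom // /shift0 addrC subrK. Qed.

Lemma comono_modular_lovasz_nonneg u : in_In I u -> (forall i, 0 <= u i) ->
  f u = lovasz f (fun i => phi (u i)).
Proof.
move=> Iu u_ge0; have [s su] := exists_in_sigma u.
rewrite (comono_modular_affine I0 f_mod Iu u_ge0 su scaled_indE).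
rewrite (lovasz_in_sigma _ (in_sigma_nondecr phi_nd Iu su)) /lovasz_chamber.
by congr (_ + _); apply: eq_bigr => k _; rewrite /shift0 opprB addrA subrK.
Qed.

Lemma comono_modular_lovasz_nonpos u : in_In I u -> (forall i, 0 <= u i) ->
  f (fun i => - u i) = f zerov + f zerov - lovasz f (fun i => phi (u i)).
Proof.
move=> Iu u_ge0; have [s su] := exists_in_sigma u.
pose g x := f (fun i => - x i).
have g0 : g zerov = f zerov.
  by congr f; apply: functional_extensionality => i; rewrite oppr0.
have g_ind t B : I t ->
    g (fun i => t * ind R B i) = g zerov + (- phi t) * shift0 f (ind R B).
  move=> It; rewrite g0 -phi_odd // -scaled_indE; last exact: I_opp.
  by congr f; apply: functional_extensionality => i; rewrite mulNr.
have g_mod := comono_modular_opp I_opp f_mod.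
rewrite (comono_modular_affine I0 g_mod Iu u_ge0 su g_ind) -/(g zerov) g0.
rewrite (lovasz_in_sigma _ (in_sigma_nondecr phi_nd Iu su)).
rewrite /lovasz_chamber opprD addrA addrK -sumrN; congr (_ + _); apply: eq_bigr => k _.
by rewrite /shift0 mulNr opprB addrA subrK.
Qed.

Lemma comono_modular_sym_lovasz x : in_In I x -> f x = sym_lovasz f (fun i => phi (x i)).
Proof.
move=> Ix.
have Ipos : in_In I (vpos x) by move=> i; rewrite /vpos; case: leP.
have Ineg : in_In I (vneg x) by move=> i; rewrite /vneg /vpos; case: leP => // _; exact: I_opp.
have pos_ge0 (y : 'I_n -> R) i : 0 <= vpos y i by rewrite le_max lexx orbT.
have := comono_modular_split I0 f_mod Ix.
rewrite (comono_modular_lovasz_nonneg Ipos (pos_ge0 x)).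
rewrite (comono_modular_lovasz_nonpos Ineg (pos_ge0 _)).
rewrite /sym_lovasz nondecr_odd_vpos // nondecr_odd_vneg // => split; lra.
Qed.

End Representation.

Section Equivalences.
Variables (R : realFieldType) (n : nat) (I : R -> Prop) (f : ('I_n -> R) -> R).
Hypotheses (I_opp : centered0 I) (I_m11 : contains_m11 I) (f_nonconst : nonconst_on I f).
Local Notation zerov := (@zerov R n).

Let I0 : I 0. Proof. by apply: I_m11; rewrite ?oppr_le0 ?ler01. Qed.

Let I1 : I 1. Proof. by apply: I_m11; rewrite ?lexx // (le_trans _ ler01) // oppr_le0. Qed.

Lemma sym_lovasz_rep_nondegenerate (phi : R -> R) :
  (forall x, in_In I x -> f x = sym_lovasz f (fun i => phi (x i))) ->
  exists A, shift0 f (ind R A) <> 0.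
Proof.
move=> f_rep; case: (boolP [exists A, shift0 f (ind R A) != 0]).
  by case/existsP=> A /eqP; exists A.
move=> /existsPn f_ind; case: f_nonconst => x [y [Ix [Iy fxy]]]; exfalso; apply: fxy.
have fB B : f (ind R B) = f zerov by apply/eqP; rewrite -subr_eq0; exact/negPn/f_ind.
by rewrite f_rep // f_rep // !sym_lovasz_const.
Qed.

Lemma sym_quasi_lovasz_comono_hom :
  sym_quasi_lovasz I f /\ (exists A, shift0 f (ind R A) <> 0) ->
  comono_modular I f /\ oddly_homogeneous I (shift0 f).
Proof.
move=> [[psi [phi [phi_nd [phi_odd f_rep]]]] [A fA]].
have phi0 := odd_on0 I0 phi_odd.
have f_ind t B : I t ->
    f (fun i => t * ind R B i) = psi zerov + phi t * (lovasz psi (ind R B) - psi zerov).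
  move=> It; rewrite f_rep; last by apply: (in_In_mul_ind (x := fun=> t)) => // i.
  rewrite -sym_lovaszZ => [|i]; last exact: ind_ge0.
  by congr sym_lovasz; apply: functional_extensionality => i; rewrite /ind; case: ifP;
    rewrite ?mulr1 ?mulr0.
have f0 : f zerov = psi zerov.
  have zerov_ind : zerov = (fun i => 0 * ind R set0 i).
    by apply: functional_extensionality => i; rewrite mul0r.
  by rewrite {1}zerov_ind f_ind // phi0 mul0r addr0.
have shift0_ind t B : I t ->
    shift0 f (fun i => t * ind R B i) = phi t * (lovasz psi (ind R B) - psi zerov).
  by move=> It; rewrite /shift0 f_ind // f0 addrC addKr.
have shift0_ind1 B : shift0 f (ind R B) = phi 1 * (lovasz psi (ind R B) - psi zerov).
  by rewrite -shift0_ind // mul1_fun.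
have phi1_gt0 : 0 < phi 1.
  rewrite lt_def -{2}phi0 phi_nd ?ler01 // andbT.
  by apply: contra_notN fA => /eqP phi1; rewrite shift0_ind1 phi1 mul0r.
split.
  move=> s x y Ix Iy sx sy.
  rewrite !f_rep //; [|exact: in_In_vmax|exact: in_In_vmin].
  by move: (sym_lovasz_comono_modular psi phi_nd Ix Iy sx sy).
exists (fun t => phi t / phi 1); split; [|split].
- by move=> a b Ia Ib ab; rewrite ler_pM2r ?invr_gt0 // phi_nd.
- by move=> a Ia; rewrite phi_odd // mulNr.
- by move=> t B It; rewrite shift0_ind // shift0_ind1 mulrA divfK ?gt_eqF.
Qed.

Lemma comono_hom_sym_lovasz_rep :
  comono_modular I f /\ oddly_homogeneous I (shift0 f) ->
  exists phi : R -> R, nondecr_on I phi /\ odd_on I phi /\ phi 1 = 1 /\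
    forall x, in_In I x -> f x = sym_lovasz f (fun i => phi (x i)).
Proof.
move=> [f_mod [phi [phi_nd [phi_odd f_hom]]]].
have f_rep := comono_modular_sym_lovasz I_opp I0 f_mod phi_nd phi_odd f_hom.
exists phi; do !split => //.
have [A /eqP fA] := sym_lovasz_rep_nondegenerate f_rep.
by apply: (mulIf fA); rewrite mul1r -f_hom // mul1_fun.
Qed.

Lemma sym_lovasz_rep_quasi_lovasz :
  (exists phi : R -> R, nondecr_on I phi /\ odd_on I phi /\ phi 1 = 1 /\
    forall x, in_In I x -> f x = sym_lovasz f (fun i => phi (x i))) ->
  sym_quasi_lovasz I f /\ exists A, shift0 f (ind R A) <> 0.
Proof.
move=> [phi [phi_nd [phi_odd [_ f_rep]]]]; split; first by exists f, phi.
exact: sym_lovasz_rep_nondegenerate f_rep.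
Qed.

End Equivalences.

Theorem theorem18 (R : realFieldType) (n : nat) (I : R -> Prop)
  (f : ('I_n -> R) -> R)
  (HI : is_interval I) (HIc : centered0 I) (HI1 : contains_m11 I)
  (Hnc : nonconst_on (fun x => I x /\ 0 <= x) f \/
         nonconst_on (fun x => I x /\ x <= 0) f) :
  ((sym_quasi_lovasz I f /\ exists A : {set 'I_n}, shift0 f (ind R A) <> 0)
     <-> (comono_modular I f /\ oddly_homogeneous I (shift0 f)))
  /\
  ((comono_modular I f /\ oddly_homogeneous I (shift0 f))
     <-> (exists phi : R -> R, nondecr_on I phi /\ odd_on I phi /\ phi 1 = 1 /\
           forall x, in_In I x -> f x = sym_lovasz f (fun i => phi (x i)))).
Proof.
have f_nonconst : nonconst_on I f by case: Hnc; apply: nonconst_on_sub => x [].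
have i_ii := sym_quasi_lovasz_comono_hom (f := f) HI1.
have ii_iii := comono_hom_sym_lovasz_rep HIc HI1 f_nonconst.
have iii_i := sym_lovasz_rep_quasi_lovasz f_nonconst.
by split; [split=> [/i_ii | /ii_iii/iii_i] | split=> [/ii_iii | /iii_i/i_ii]].
Qed.
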